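(* Let $\mathcal{H}$ be a hedgehog with support function $h(s)=a_0+\sum_{n\geqslant1}(a_n\cos(ns)+b_n\sin(ns))$ and let $k>2$ be an integer. Every equiangular $k$-gon circumscribed about $\mathcal{H}$ is a regular $k$-gon with its center of mass at the Steiner point of $\mathcal{H}$ if and only if \[ h(s)=a_0+a_1\cos s+b_1\sin s+\sum_{k\mid n,\ n>1}\big(a_n\cos(ns)+b_n\sin(ns)\big). \]
   Context: Write $u(s)=(\cos s,\sin s)$, $u'(s)=(-\sin s,\cos s)$. A hedgehog is a closed planar curve determined by a smooth $2\pi$-periodic function $h$ (its support function) via $\mathcal{H}(s)=h(s)u(s)+h'(s)u'(s)$; the support line of $\mathcal{H}$ with normal $u(t)$ is $\{x:\langle x,u(t)\rangle=h(t)\}$. The Steiner point of $\mathcal{H}$ is $\frac1\pi\int_0^{2\pi}h(s)u(s)\,ds=(a_1,b_1)$. For $s\in\mathbb{R}$ and $j\in\mathbb{Z}$ let $\ell_j(s)=\{x:\langle x,u(s+\tfrac{2\pi j}{k})\rangle=h(s+\tfrac{2\pi j}{k})\}$. The equiangular $k$-gon circumscribed about $\mathcal{H}$ at parameter $s$ is the polygon with vertices $v_j(s)=\ell_j(s)\cap\ell_{j+1}(s)$, $j=0,\dots,k-1$ (indices mod $k$); i.e. each of its sides lies on a support line of $\mathcal{H}$ and consecutive side normals differ by $2\pi/k$. Its center of mass is $\frac1k\sum_{j}v_j(s)$. *)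

From Stdlib Require Import Reals Lra.
From Coquelicot Require Import Coquelicot.
Open Scope R_scope.

Definition pt := (R * R)%type.
Definition dot (x y : pt) : R := fst x * fst y + snd x * snd y.
Definition u (s : R) : pt := (cos s, sin s).
Definition u' (s : R) : pt := (- sin s, cos s).

Definition smooth (h : R -> R) : Prop := forall (n : nat) (x : R), ex_derive_n h n x.
Definition periodic2pi (h : R -> R) : Prop := forall s, h (s + 2 * PI) = h s.

Definition fa0 (h : R -> R) : R := / (2 * PI) * RInt h 0 (2 * PI).
Definition fa (h : R -> R) (n : nat) : R :=
  / PI * RInt (fun s => h s * cos (INR n * s)) 0 (2 * PI).
Definition fb (h : R -> R) (n : nat) : R :=
  / PI * RInt (fun s => h s * sin (INR n * s)) 0 (2 * PI).

Definition steiner_point (h : R -> R) : pt :=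
  (/ PI * RInt (fun s => h s * cos s) 0 (2 * PI),
   / PI * RInt (fun s => h s * sin s) 0 (2 * PI)).

(* Intersection point of the lines {x | <x,u(al)> = p} and {x | <x,u(be)> = q}
   (Cramer's rule; the lines are non-parallel when sin(be - al) <> 0). *)
Definition line_inter (al p be q : R) : pt :=
  let d := cos al * sin be - sin al * cos be in
  ((p * sin be - sin al * q) / d, (cos al * q - cos be * p) / d).

(* Normal angle of the support line l_j(s) *)
Definition theta (k : nat) (s : R) (j : nat) : R := s + 2 * PI * INR j / INR k.

Definition vertex (h : R -> R) (k : nat) (s : R) (j : nat) : pt :=
  line_inter (theta k s j) (h (theta k s j))
             (theta k s (S j)) (h (theta k s (S j))).

(* Signed length of the side lying on l_j(s), from v_{j-1}(s) to v_j(s),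
   measured along the direction u'(theta_j); j ranges over 1..k
   (l_k = l_0 by 2pi-periodicity). *)
Definition side_length (h : R -> R) (k : nat) (s : R) (j : nat) : R :=
  let v1 := vertex h k s j in
  let v0 := vertex h k s (pred j) in
  dot (fst v1 - fst v0, snd v1 - snd v0) (u' (theta k s j)).

(* The (equiangular) circumscribed k-gon at parameter s is regular:
   all its (signed) side lengths are equal. *)
Definition regular_polygon (h : R -> R) (k : nat) (s : R) : Prop :=
  forall i j : nat, (1 <= i <= k)%nat -> (1 <= j <= k)%nat ->
    side_length h k s i = side_length h k s j.

Definition center_of_mass (h : R -> R) (k : nat) (s : R) : pt :=
  (/ INR k * sum_n (fun j => fst (vertex h k s j)) (pred k),
   / INR k * sum_n (fun j => snd (vertex h k s j)) (pred k)).

Definition kterm (h : R -> R) (k : nat) (s : R) (n : nat) : R :=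
  if andb (Nat.ltb 1 n) (Nat.eqb (Nat.modulo n k) 0)
  then fa h n * cos (INR n * s) + fb h n * sin (INR n * s)
  else 0.

(* Write [a = 2 PI / k]. The side of the circumscribed k-gon lying on [l_j(s)] has signed length
   [(h(s + (j+1) a) + h(s + (j-1) a) - 2 cos a h(s + j a)) / sin a]. If [h] agrees with
   [P + A cos + B sin] on the orbit [s + a Z], the support function of a circle, the k-gon is
   regular with centre of mass [(A, B)]. Conversely, equality of consecutive sides makes the
   second difference of [h] [a]-periodic; the rest of [h] solves a linear recurrence whose
   solutions are [A cos + B sin] on each orbit, and the centre-of-mass condition forces
   [(A, B) = (a_1, b_1)]. So both sides of the equivalence say that [h - a_1 cos - b_1 sin]
   is [a]-periodic: the series on the right visibly is, and an [a]-periodic function has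
   vanishing Fourier coefficients of every order [n > 1] not divisible by [k], so the
   pointwise convergence of the Fourier series of a smooth function (Dirichlet kernel and
   Riemann-Lebesgue) yields the series on the right. *)

From Stdlib Require Import Reals Lra Psatz Lia.
From Coquelicot Require Import Coquelicot.
Open Scope R_scope.

(** * Equiangular circumscribed polygons *)

Definition exterior_angle (k : nat) : R := 2 * PI / INR k.

Lemma exterior_angle_bounds k : (2 < k)%nat -> 0 < exterior_angle k < PI.
Proof.
  intros Hk. pose proof PI_RGT_0. unfold exterior_angle.
  assert (H3 : 3 <= INR k) by (replace 3 with (INR 3) by (simpl; ring); apply le_INR; lia).
  split; [apply Rdiv_lt_0_compat; lra|].
  apply (Rmult_lt_reg_r (INR k)); [lra|].
  unfold Rdiv. rewrite Rmult_assoc, Rinv_l by lra. nra.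
Qed.

Lemma sin_exterior_angle_gt0 k : (2 < k)%nat -> 0 < sin (exterior_angle k).
Proof. intros Hk. apply sin_gt_0; apply exterior_angle_bounds; auto. Qed.

Lemma cos_lt_1 x : 0 < x < 2 * PI -> cos x < 1.
Proof.
  intros Hx. replace x with (2 * (x / 2)) by field. rewrite cos_2a_sin.
  assert (0 < sin (x / 2)) by (apply sin_gt_0; lra). nra.
Qed.

Lemma cos_mult_exterior_angle_lt_1 k n :
  (0 < k)%nat -> (n mod k <> 0)%nat -> cos (INR n * exterior_angle k) < 1.
Proof.
  intros Hk Hr. pose proof (Nat.div_mod_eq n k) as Hd.
  pose proof (Nat.mod_upper_bound n k ltac:(lia)) as Hu.
  set (q := (n / k)%nat) in *. set (r := (n mod k)%nat) in *.
  assert (Hk0 : 0 < INR k) by (apply lt_0_INR; lia).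
  assert (HI : INR n = INR k * INR q + INR r)
    by (rewrite Hd at 1; rewrite plus_INR, mult_INR; ring).
  unfold exterior_angle.
  replace (INR n * (2 * PI / INR k)) with (2 * PI * INR r / INR k + 2 * INR q * PI)
    by (rewrite HI; field; lra).
  rewrite cos_period. apply cos_lt_1. pose proof PI_RGT_0.
  assert (0 < INR r) by (apply lt_0_INR; lia).
  assert (INR r < INR k) by (apply lt_INR; lia).
  split; [apply Rdiv_lt_0_compat; nra|].
  apply (Rmult_lt_reg_r (INR k)); auto.
  unfold Rdiv. rewrite Rmult_assoc, Rinv_l by lra. nra.
Qed.

Lemma theta_0 k s : theta k s 0 = s.
Proof. unfold theta, Rdiv. simpl. ring. Qed.

Lemma theta_exterior_angle k s j : (0 < k)%nat -> theta k s j = s + INR j * exterior_angle k.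
Proof. intros. unfold theta, exterior_angle. field. apply not_0_INR; lia. Qed.

Lemma theta_S k s j : (0 < k)%nat -> theta k s (S j) = theta k s j + exterior_angle k.
Proof. intros. rewrite !theta_exterior_angle, S_INR by auto. ring. Qed.

Lemma theta_k k s : (0 < k)%nat -> theta k s k = s + 2 * PI.
Proof. intros. unfold theta. field. apply not_0_INR; lia. Qed.

Lemma dot_line_inter_l al p be q :
  dot (line_inter al p be q) (u' al) = (q - p * cos (be - al)) / sin (be - al).
Proof.
  unfold dot, line_inter, u'; simpl. rewrite cos_minus, sin_minus.
  replace (sin be * cos al - cos be * sin al) with (cos al * sin be - sin al * cos be) by ring.
  pose proof (sin2_cos2 al) as E. unfold Rsqr in E.
  transitivity ((q * (sin al * sin al + cos al * cos al)
                 - p * (cos be * cos al + sin be * sin al))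
                / (cos al * sin be - sin al * cos be)).
  - unfold Rdiv. ring.
  - rewrite E. unfold Rdiv. ring.
Qed.

Lemma dot_line_inter_r al p be q :
  dot (line_inter al p be q) (u' be) = (q * cos (be - al) - p) / sin (be - al).
Proof.
  unfold dot, line_inter, u'; simpl. rewrite cos_minus, sin_minus.
  replace (sin be * cos al - cos be * sin al) with (cos al * sin be - sin al * cos be) by ring.
  pose proof (sin2_cos2 be) as E. unfold Rsqr in E.
  transitivity ((q * (cos be * cos al + sin be * sin al)
                 - p * (sin be * sin be + cos be * cos be))
                / (cos al * sin be - sin al * cos be)).
  - unfold Rdiv. ring.
  - rewrite E. unfold Rdiv. ring.
Qed.

Lemma side_length_formula h k s j : (2 < k)%nat -> (1 <= j)%nat ->
  side_length h k s j =
  (h (theta k s (S j)) + h (theta k s (pred j)) - 2 * cos (exterior_angle k) * h (theta k s j))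
  / sin (exterior_angle k).
Proof.
  intros Hk Hj. unfold side_length, vertex.
  replace (S (pred j)) with j by lia.
  set (v1 := line_inter _ _ _ _). set (v0 := line_inter _ _ _ _).
  transitivity (dot v1 (u' (theta k s j)) - dot v0 (u' (theta k s j))).
  { unfold dot; simpl; ring. }
  unfold v1, v0. rewrite dot_line_inter_l, dot_line_inter_r.
  replace (theta k s (S j) - theta k s j) with (exterior_angle k) by (rewrite theta_S by lia; ring).
  replace (theta k s j - theta k s (pred j)) with (exterior_angle k)
    by (replace j with (S (pred j)) at 1 by lia; rewrite theta_S by lia; ring).
  pose proof (sin_exterior_angle_gt0 k Hk). field. lra.
Qed.

(* [P + A cos t + B sin t] is the support function of the circle of radius [P] centred at
   [(A, B)]. *)
Definition circle_support_at (h : R -> R) (k : nat) (s P A B : R) : Prop :=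
  forall j, h (theta k s j) = P + A * cos (theta k s j) + B * sin (theta k s j).

Lemma sin_theta_S_cross k s j : (0 < k)%nat ->
  cos (theta k s j) * sin (theta k s (S j)) - sin (theta k s j) * cos (theta k s (S j))
  = sin (exterior_angle k).
Proof.
  intros Hk. rewrite theta_S, sin_plus, cos_plus by auto.
  pose proof (sin2_cos2 (theta k s j)) as E. unfold Rsqr in E.
  transitivity (sin (exterior_angle k)
                * (sin (theta k s j) * sin (theta k s j) + cos (theta k s j) * cos (theta k s j))).
  - ring.
  - rewrite E. ring.
Qed.

Lemma vertex_circle h k s P A B j : (2 < k)%nat -> circle_support_at h k s P A B ->
  vertex h k s j =
  (A + P / sin (exterior_angle k) * (sin (theta k s (S j)) - sin (theta k s j)),
   B - P / sin (exterior_angle k) * (cos (theta k s (S j)) - cos (theta k s j))).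
Proof.
  intros Hk Hc. pose proof (sin_exterior_angle_gt0 k Hk) as Hsin.
  pose proof (sin_theta_S_cross k s j ltac:(lia)) as Hcross.
  unfold vertex, line_inter. rewrite !Hc. cbv zeta. rewrite <- Hcross.
  f_equal; field; lra.
Qed.

Lemma sum_n_telescope (A c : R) (f : nat -> R) n :
  sum_n (fun j => A + c * (f (S j) - f j)) n = INR (S n) * A + c * (f (S n) - f O).
Proof.
  induction n.
  - rewrite sum_O. simpl. ring.
  - rewrite sum_Sn, IHn, !S_INR. change plus with Rplus. simpl. ring.
Qed.

Lemma center_of_mass_circle h k s P A B : (2 < k)%nat ->
  circle_support_at h k s P A B -> center_of_mass h k s = (A, B).
Proof.
  intros Hk Hc. unfold center_of_mass.
  rewrite (sum_n_ext _ (fun j => A + P / sin (exterior_angle k)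
                                     * (sin (theta k s (S j)) - sin (theta k s j))))
    by (intros; rewrite (vertex_circle h k s P A B) by auto; reflexivity).
  rewrite (sum_n_ext (fun j => snd _) (fun j => B + - P / sin (exterior_angle k)
                                     * (cos (theta k s (S j)) - cos (theta k s j))))
    by (intros; rewrite (vertex_circle h k s P A B) by auto; simpl; unfold Rdiv; ring).
  rewrite (sum_n_telescope A _ (fun j => sin (theta k s j))).
  rewrite (sum_n_telescope B _ (fun j => cos (theta k s j))).
  replace (S (pred k)) with k by lia.
  rewrite theta_k, theta_0, <- (sin_period s 1), <- (cos_period s 1) by lia.
  replace (s + 2 * INR 1 * PI) with (s + 2 * PI) by (simpl; ring).
  assert (INR k <> 0) by (apply not_0_INR; lia).
  pose proof (sin_exterior_angle_gt0 k Hk).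
  f_equal; field; split; auto; lra.
Qed.

Lemma regular_polygon_circle h k s P A B : (2 < k)%nat ->
  circle_support_at h k s P A B -> regular_polygon h k s.
Proof.
  intros Hk Hc.
  assert (Hside : forall j, (1 <= j)%nat -> side_length h k s j =
     P * (2 - 2 * cos (exterior_angle k)) / sin (exterior_angle k)).
  { intros j Hj. rewrite side_length_formula, !Hc by auto.
    replace (theta k s (pred j)) with (theta k s j - exterior_angle k)
      by (replace j with (S (pred j)) at 1 by lia; rewrite theta_S by lia; ring).
    rewrite theta_S, cos_plus, sin_plus, cos_minus, sin_minus by lia.
    pose proof (sin_exterior_angle_gt0 k Hk). field. lra. }
  intros i j Hi Hj. rewrite !Hside by lia. reflexivity.
Qed.

Definition second_difference (h : R -> R) (a t : R) : R :=
  h (t + 2 * a) - 2 * cos a * h (t + a) + h t.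

Lemma regular_polygon_second_difference h k s : (2 < k)%nat -> regular_polygon h k s ->
  second_difference h (exterior_angle k) (s + exterior_angle k)
  = second_difference h (exterior_angle k) s.
Proof.
  intros Hk Hreg. pose proof (sin_exterior_angle_gt0 k Hk).
  specialize (Hreg 2%nat 1%nat ltac:(lia) ltac:(lia)).
  rewrite !side_length_formula in Hreg by (auto; lia).
  unfold Rdiv in Hreg. apply Rmult_eq_reg_r in Hreg; [|apply Rinv_neq_0_compat; lra].
  rewrite !theta_exterior_angle in Hreg by lia. simpl pred in Hreg. unfold second_difference.
  replace (s + INR 0 * exterior_angle k) with s in Hreg by (simpl; ring).
  replace (s + exterior_angle k + 2 * exterior_angle k)
    with (s + INR 3 * exterior_angle k) by (simpl; ring).
  replace (s + exterior_angle k + exterior_angle k)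
    with (s + INR 2 * exterior_angle k) by (simpl; ring).
  replace (s + 2 * exterior_angle k) with (s + INR 2 * exterior_angle k) by (simpl; ring).
  replace (s + exterior_angle k) with (s + INR 1 * exterior_angle k) by (simpl; ring).
  lra.
Qed.

Lemma shift_invariant_orbit (f : R -> R) a t j :
  (forall t, f (t + a) = f t) -> f (t + INR j * a) = f t.
Proof.
  intros Hf. induction j.
  - f_equal. simpl. ring.
  - rewrite S_INR, <- IHj, <- (Hf (t + INR j * a)). f_equal. ring.
Qed.

Lemma cos_sin_recurrence (w : R -> R) a s : sin a <> 0 ->
  (forall t, w (t + 2 * a) = 2 * cos a * w (t + a) - w t) ->
  exists A B, forall j,
    w (s + INR j * a) = A * cos (s + INR j * a) + B * sin (s + INR j * a).
Proof.
  intros Ha Hw.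
  exists ((w s * sin (s + a) - sin s * w (s + a)) / sin a),
         ((cos s * w (s + a) - cos (s + a) * w s) / sin a).
  set (A := (w s * sin (s + a) - sin s * w (s + a)) / sin a).
  set (B := (cos s * w (s + a) - cos (s + a) * w s) / sin a).
  set (F := fun t => A * cos t + B * sin t).
  assert (HF : forall t, F (t + 2 * a) = 2 * cos a * F (t + a) - F t).
  { intros t.
    assert (Hsym : F ((t + a) + a) + F ((t + a) - a) = 2 * cos a * F (t + a))
      by (unfold F; rewrite (cos_plus (t + a)), (sin_plus (t + a)), (cos_minus (t + a)),
            (sin_minus (t + a)); ring).
    replace (t + a + a) with (t + 2 * a) in Hsym by ring.
    replace (t + a - a) with t in Hsym by ring. lra. }
  assert (Hcross : sin (s + a) * cos s - cos (s + a) * sin s = sin a)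
    by (rewrite sin_plus, cos_plus; pose proof (sin2_cos2 s) as E; unfold Rsqr in E;
        transitivity (sin a * (sin s * sin s + cos s * cos s)); [ring | rewrite E; ring]).
  assert (H0 : w s = F s)
    by (unfold F, A, B; rewrite <- Hcross in Ha |- *; field; exact Ha).
  assert (H1 : w (s + a) = F (s + a))
    by (unfold F, A, B; rewrite <- Hcross in Ha |- *; field; exact Ha).
  assert (Hpair : forall j, w (s + INR j * a) = F (s + INR j * a)
                           /\ w (s + INR (S j) * a) = F (s + INR (S j) * a)).
  { induction j as [|j [IH0 IH1]].
    - simpl. replace (s + 0 * a) with s by ring. replace (s + 1 * a) with (s + a) by ring.
      auto.
    - split; [exact IH1|].
      replace (s + INR (S (S j)) * a) with ((s + INR j * a) + 2 * a)
        by (rewrite !S_INR; ring).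
      replace (s + INR (S j) * a) with ((s + INR j * a) + a) in IH1
        by (rewrite S_INR; ring).
      rewrite Hw, HF, IH0, IH1. reflexivity. }
  intros j. apply Hpair.
Qed.

Lemma regular_centered_shift_invariant h k a1 b1 : (2 < k)%nat ->
  (forall s, regular_polygon h k s /\ center_of_mass h k s = (a1, b1)) ->
  forall t, h (t + exterior_angle k) - a1 * cos (t + exterior_angle k)
            - b1 * sin (t + exterior_angle k)
          = h t - a1 * cos t - b1 * sin t.
Proof.
  intros Hk Hpoly.
  pose proof (exterior_angle_bounds k Hk) as Hbounds.
  pose proof (sin_exterior_angle_gt0 k Hk) as Hsin.
  set (a := exterior_angle k) in *.
  assert (Hc : cos a < 1) by (apply cos_lt_1; lra).
  (* an [a]-periodic function has second difference [(2 - 2 cos a)] times itself, so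
     [w := h - g0] satisfies the homogeneous recurrence *)
  set (g0 := fun t => second_difference h a t / (2 - 2 * cos a)).
  assert (Hg0 : forall t, g0 (t + a) = g0 t).
  { intros t. unfold g0. f_equal. apply regular_polygon_second_difference; auto.
    apply Hpoly. }
  set (w := fun t => h t - g0 t).
  assert (Hw : forall t, w (t + 2 * a) = 2 * cos a * w (t + a) - w t).
  { intros t. unfold w.
    replace (t + 2 * a) with ((t + a) + a) at 2 by ring. rewrite !Hg0.
    unfold g0, second_difference. field. lra. }
  assert (Hwt : forall s, w s = a1 * cos s + b1 * sin s).
  { intros s.
    destruct (cos_sin_recurrence w a s ltac:(lra) Hw) as [A [B HAB]].
    assert (Hcirc : circle_support_at h k s (g0 s) A B).
    { intros j. rewrite theta_exterior_angle by lia. fold a.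
      rewrite <- (shift_invariant_orbit g0 a s j Hg0).
      specialize (HAB j). unfold w in HAB. lra. }
    destruct (Hpoly s) as [_ Hcm].
    rewrite (center_of_mass_circle h k s (g0 s) A B Hk Hcirc) in Hcm.
    injection Hcm as -> ->.
    specialize (HAB 0%nat). simpl INR in HAB.
    replace (s + 0 * a) with s in HAB by ring. exact HAB. }
  intros t.
  assert (Hg : forall s, h s - a1 * cos s - b1 * sin s = g0 s)
    by (intros s; specialize (Hwt s); unfold w in Hwt; lra).
  rewrite !Hg. apply Hg0.
Qed.
(** * Integrals of periodic functions *)

(* Goals produced by Coquelicot's integrals are equalities in a normed-module carrier that
   [ring] and [field] do not recognise as [R]. *)
Ltac R_eq := match goal with |- ?a = ?b => change (@eq R a b) end.

Ltac continuous_by_derive :=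
  apply (ex_derive_continuous (K := R_AbsRing) (V := R_NormedModule));
  auto_derive; repeat split; auto.

Section RealIntegrals.

Implicit Types f g F : R -> R.

Lemma continuous_scal_R f c : (forall x, continuous f x) ->
  forall x, continuous (fun t => c * f t) x.
Proof. intros H x. apply (continuous_scal_r c f x); auto. Qed.

Lemma continuous_mult_R f g : (forall x, continuous f x) -> (forall x, continuous g x) ->
  forall x, continuous (fun t => f t * g t) x.
Proof. intros Hf Hg x. apply (continuous_mult f g x); auto. Qed.

Lemma ex_RInt_continuous_R f a b : (forall x, continuous f x) -> ex_RInt f a b.
Proof. intros H. apply (ex_RInt_continuous (V := R_CompleteNormedModule)). intros; apply H. Qed.

Lemma RInt_plus_continuous f g a b : (forall x, continuous f x) -> (forall x, continuous g x) ->
  RInt (fun t => f t + g t) a b = RInt f a b + RInt g a b.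
Proof. intros. apply (RInt_plus f g); apply ex_RInt_continuous_R; auto. Qed.

Lemma RInt_minus_continuous f g a b : (forall x, continuous f x) -> (forall x, continuous g x) ->
  RInt (fun t => f t - g t) a b = RInt f a b - RInt g a b.
Proof. intros. apply (RInt_minus f g); apply ex_RInt_continuous_R; auto. Qed.

Lemma RInt_scal_continuous f c a b : (forall x, continuous f x) ->
  RInt (fun t => c * f t) a b = c * RInt f a b.
Proof. intros. apply (RInt_scal f a b c); apply ex_RInt_continuous_R; auto. Qed.

Lemma RInt_translate F b c d : (forall x, continuous F x) ->
  RInt (fun t => F (t + b)) c d = RInt F (c + b) (d + b).
Proof.
  intros HF.
  pose proof (RInt_comp_lin (V := R_CompleteNormedModule) F 1 b c d
                (ex_RInt_continuous_R _ _ _ HF)) as E.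
  replace (c + b) with (1 * c + b) by ring. replace (d + b) with (1 * d + b) by ring.
  rewrite <- E. apply RInt_ext. intros x _.
  replace (1 * x + b) with (x + b) by ring. change (F (x + b) = 1 * F (x + b)). ring.
Qed.

Lemma RInt_periodic_translate F b : (forall x, continuous F x) ->
  (forall t, F (t + 2 * PI) = F t) ->
  RInt (fun t => F (t + b)) 0 (2 * PI) = RInt F 0 (2 * PI).
Proof.
  intros HF Hp. rewrite RInt_translate by auto. replace (0 + b) with b by ring.
  rewrite <- (RInt_Chasles F b 0 (2 * PI + b)) by (apply ex_RInt_continuous_R; auto).
  rewrite <- (RInt_Chasles F 0 (2 * PI) (2 * PI + b)) by (apply ex_RInt_continuous_R; auto).
  assert (Hwrap : RInt F (2 * PI) (2 * PI + b) = RInt F 0 b).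
  { replace (2 * PI) with (0 + 2 * PI) at 1 by ring.
    replace (2 * PI + b) with (b + 2 * PI) by ring.
    rewrite <- RInt_translate by auto. apply RInt_ext; intros; apply Hp. }
  rewrite Hwrap, <- (opp_RInt_swap F 0 b) by (apply ex_RInt_continuous_R; auto).
  change plus with Rplus. change opp with Ropp. simpl. ring.
Qed.

Lemma RInt_periodic_centered F x : (forall x, continuous F x) ->
  (forall t, F (t + 2 * PI) = F t) ->
  RInt (fun u => F (x + u)) (- PI) PI = RInt F 0 (2 * PI).
Proof.
  intros HF Hp. rewrite <- (RInt_periodic_translate F (x - PI)), !RInt_translate by auto.
  rewrite (RInt_ext (fun u => F (x + u)) (fun u => F (u + x))) by (intros; f_equal; ring).
  rewrite RInt_translate by auto. f_equal; ring.
Qed.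

Lemma RInt_derive_periodic F f : (forall t, is_derive F t (f t)) ->
  (forall t, continuous f t) -> F (2 * PI) = F 0 -> RInt f 0 (2 * PI) = 0.
Proof.
  intros HF Hf Hper.
  rewrite (is_RInt_unique f 0 (2 * PI) (F (2 * PI) - F 0)).
  - rewrite Hper. R_eq. ring.
  - apply (is_RInt_derive (V := R_CompleteNormedModule)); auto.
Qed.

End RealIntegrals.

Lemma cos_mult_2PI m : cos (INR m * (2 * PI)) = 1.
Proof. replace (INR m * (2 * PI)) with (0 + 2 * INR m * PI) by ring. rewrite cos_period. apply cos_0. Qed.

Lemma sin_mult_2PI m : sin (INR m * (2 * PI)) = 0.
Proof. replace (INR m * (2 * PI)) with (0 + 2 * INR m * PI) by ring. rewrite sin_period. apply sin_0. Qed.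

Lemma RInt_cos_mult m : (1 <= m)%nat -> RInt (fun t => cos (INR m * t)) 0 (2 * PI) = 0.
Proof.
  intros Hm. assert (INR m <> 0) by (apply not_0_INR; lia).
  apply (RInt_derive_periodic (fun t => sin (INR m * t) / INR m)).
  - intros t. auto_derive; auto. field; auto.
  - intros t. continuous_by_derive.
  - rewrite sin_mult_2PI, Rmult_0_r, sin_0. reflexivity.
Qed.

(** * Fourier coefficients *)

Section FirstHarmonicOrthogonality.

Variables (n : nat) (a1 b1 : R).
Hypothesis Hn : (2 <= n)%nat.

Let m := INR n - 1.
Let p := INR n + 1.

Let cos_m t : cos (m * t) = cos (INR n * t) * cos t + sin (INR n * t) * sin t.
Proof. unfold m. rewrite <- cos_minus. f_equal. ring. Qed.
Let sin_m t : sin (m * t) = sin (INR n * t) * cos t - cos (INR n * t) * sin t.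
Proof. unfold m. rewrite <- sin_minus. f_equal. ring. Qed.
Let cos_p t : cos (p * t) = cos (INR n * t) * cos t - sin (INR n * t) * sin t.
Proof. unfold p. rewrite <- cos_plus. f_equal. ring. Qed.
Let sin_p t : sin (p * t) = sin (INR n * t) * cos t + cos (INR n * t) * sin t.
Proof. unfold p. rewrite <- sin_plus. f_equal. ring. Qed.

Let m_pos : 0 < m.
Proof. unfold m. apply le_INR in Hn. simpl in Hn. lra. Qed.
Let p_pos : 0 < p.
Proof. unfold p. pose proof (pos_INR n). lra. Qed.

Let m_period : m * (2 * PI) = INR (n - 1) * (2 * PI).
Proof. unfold m. rewrite minus_INR by lia. simpl. ring. Qed.
Let p_period : p * (2 * PI) = INR (n + 1) * (2 * PI).
Proof. unfold p. rewrite plus_INR. simpl. ring. Qed.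

Lemma RInt_first_harmonic_mul_cos :
  RInt (fun t => (a1 * cos t + b1 * sin t) * cos (INR n * t)) 0 (2 * PI) = 0.
Proof.
  apply (RInt_derive_periodic
    (fun t => a1 / 2 * (sin (m * t) / m + sin (p * t) / p)
              + b1 / 2 * (cos (m * t) / m - cos (p * t) / p))).
  - intros t. auto_derive; auto.
    rewrite cos_m, sin_m, cos_p, sin_p. field. lra.
  - intros t. continuous_by_derive.
  - rewrite m_period, p_period, !cos_mult_2PI, !sin_mult_2PI, !Rmult_0_r, sin_0, cos_0.
    reflexivity.
Qed.

Lemma RInt_first_harmonic_mul_sin :
  RInt (fun t => (a1 * cos t + b1 * sin t) * sin (INR n * t)) 0 (2 * PI) = 0.
Proof.
  apply (RInt_derive_periodic
    (fun t => - (a1 / 2) * (cos (m * t) / m + cos (p * t) / p)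
              + b1 / 2 * (sin (m * t) / m - sin (p * t) / p))).
  - intros t. auto_derive; auto.
    rewrite cos_m, sin_m, cos_p, sin_p. field. lra.
  - intros t. continuous_by_derive.
  - rewrite m_period, p_period, !cos_mult_2PI, !sin_mult_2PI, !Rmult_0_r, cos_0, sin_0.
    reflexivity.
Qed.

End FirstHarmonicOrthogonality.

Lemma rotation_fixed_point_eq0 C S X Y : C <> 1 ->
  X = C * X - S * Y -> Y = S * X + C * Y -> X = 0 /\ Y = 0.
Proof.
  intros HC HX HY.
  assert (Hpos : 0 < (1 - C) * (1 - C)) by (apply (Rsqr_pos_lt (1 - C)); lra).
  assert (HD : (1 - C) * (1 - C) + S * S <> 0) by nra.
  assert (E1 : (1 - C) * X + S * Y = 0) by lra.
  assert (E2 : (1 - C) * Y - S * X = 0) by lra.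
  split; apply (Rmult_eq_reg_r ((1 - C) * (1 - C) + S * S)); auto.
  - transitivity ((1 - C) * ((1 - C) * X + S * Y) - S * ((1 - C) * Y - S * X)); [ring|].
    rewrite E1, E2. ring.
  - transitivity (S * ((1 - C) * X + S * Y) + (1 - C) * ((1 - C) * Y - S * X)); [ring|].
    rewrite E1, E2. ring.
Qed.

Lemma RInt_harmonics_shift_invariant (g : R -> R) a n :
  (forall x, continuous g x) -> (forall t, g (t + 2 * PI) = g t) ->
  (forall t, g (t + a) = g t) -> cos (INR n * a) <> 1 ->
  RInt (fun t => g t * cos (INR n * t)) 0 (2 * PI) = 0 /\
  RInt (fun t => g t * sin (INR n * t)) 0 (2 * PI) = 0.
Proof.
  intros Hg Hper Hshift Hna.
  assert (Hgc : forall x, continuous (fun t => g t * cos (INR n * t)) x)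
    by (intros x; apply (continuous_mult g); [apply Hg | continuous_by_derive]).
  assert (Hgs : forall x, continuous (fun t => g t * sin (INR n * t)) x)
    by (intros x; apply (continuous_mult g); [apply Hg | continuous_by_derive]).
  assert (Hcos_per : forall t, cos (INR n * (t + 2 * PI)) = cos (INR n * t))
    by (intros t; rewrite <- (cos_period (INR n * t) n); f_equal; ring).
  assert (Hsin_per : forall t, sin (INR n * (t + 2 * PI)) = sin (INR n * t))
    by (intros t; rewrite <- (sin_period (INR n * t) n); f_equal; ring).
  set (Ic := RInt (fun t => g t * cos (INR n * t)) 0 (2 * PI)).
  set (Is := RInt (fun t => g t * sin (INR n * t)) 0 (2 * PI)).
  set (C := cos (INR n * a)). set (S := sin (INR n * a)).
  (* translating by [a] rotates [(Ic, Is)] by the angle [n a], which is not a multiple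
     of [2 PI] *)
  assert (Hrot_c : Ic = C * Ic - S * Is).
  { unfold Ic at 1.
    rewrite <- (RInt_periodic_translate (fun t => g t * cos (INR n * t)) a) by
      (auto; intros; rewrite Hper, Hcos_per; auto).
    rewrite (RInt_ext _ (fun t => C * (g t * cos (INR n * t)) - S * (g t * sin (INR n * t)))).
    - rewrite RInt_minus_continuous, !RInt_scal_continuous; auto;
        apply continuous_scal_R; auto.
    - intros t _. rewrite Hshift, Rmult_plus_distr_l, cos_plus. unfold C, S. R_eq. ring. }
  assert (Hrot_s : Is = S * Ic + C * Is).
  { unfold Is at 1.
    rewrite <- (RInt_periodic_translate (fun t => g t * sin (INR n * t)) a) by
      (auto; intros; rewrite Hper, Hsin_per; auto).
    rewrite (RInt_ext _ (fun t => S * (g t * cos (INR n * t)) + C * (g t * sin (INR n * t)))).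
    - rewrite RInt_plus_continuous, !RInt_scal_continuous; auto;
        apply continuous_scal_R; auto.
    - intros t _. rewrite Hshift, Rmult_plus_distr_l, sin_plus. unfold C, S. R_eq. ring. }
  exact (rotation_fixed_point_eq0 C S Ic Is Hna Hrot_c Hrot_s).
Qed.

Lemma fourier_coef_vanish (h : R -> R) a a1 b1 n :
  (forall x, continuous h x) -> periodic2pi h ->
  (forall t, h (t + a) - a1 * cos (t + a) - b1 * sin (t + a) = h t - a1 * cos t - b1 * sin t) ->
  (2 <= n)%nat -> cos (INR n * a) <> 1 -> fa h n = 0 /\ fb h n = 0.
Proof.
  intros Hh Hper Hshift Hn Hna.
  set (g := fun t => h t - a1 * cos t - b1 * sin t).
  assert (Hg : forall x, continuous g x)
    by (intros x; apply (continuous_minus (fun t => h t - a1 * cos t));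
        [apply (continuous_minus h); [apply Hh|] |]; continuous_by_derive).
  assert (Hgper : forall t, g (t + 2 * PI) = g t).
  { intros t. unfold g. rewrite Hper, <- (cos_period t 1), <- (sin_period t 1).
    simpl INR. do 4 f_equal; ring. }
  destruct (RInt_harmonics_shift_invariant g a n Hg Hgper Hshift Hna) as [Hc Hs].
  assert (Hcos : forall y, continuous (fun t => cos (INR n * t)) y)
    by (intros; continuous_by_derive).
  assert (Hsin : forall y, continuous (fun t => sin (INR n * t)) y)
    by (intros; continuous_by_derive).
  assert (H1 : forall y, continuous (fun t => a1 * cos t + b1 * sin t) y)
    by (intros; continuous_by_derive).
  unfold fa, fb. split.
  - rewrite (RInt_ext _ (fun t => g t * cos (INR n * t)
                                  + (a1 * cos t + b1 * sin t) * cos (INR n * t)))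
      by (intros; unfold g; R_eq; ring).
    rewrite RInt_plus_continuous, Hc, RInt_first_harmonic_mul_cos
      by (auto; apply continuous_mult_R; auto).
    R_eq. ring.
  - rewrite (RInt_ext _ (fun t => g t * sin (INR n * t)
                                  + (a1 * cos t + b1 * sin t) * sin (INR n * t)))
      by (intros; unfold g; R_eq; ring).
    rewrite RInt_plus_continuous, Hs, RInt_first_harmonic_mul_sin
      by (auto; apply continuous_mult_R; auto).
    R_eq. ring.
Qed.

(** * Pointwise convergence of Fourier series *)

Definition fourier_term (h : R -> R) (x : R) (n : nat) : R :=
  match n with
  | O => fa0 h
  | S _ => fa h n * cos (INR n * x) + fb h n * sin (INR n * x)
  end.

Fixpoint dirichlet_kernel (N : nat) (u : R) : R :=
  match N with
  | O => 1
  | S m => dirichlet_kernel m u + 2 * cos (INR (S m) * u)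
  end.

Lemma ex_derive_dirichlet_kernel N u : ex_derive (dirichlet_kernel N) u.
Proof.
  induction N.
  - apply ex_derive_const.
  - apply (ex_derive_plus (dirichlet_kernel N)); auto. auto_derive; auto.
Qed.

Lemma continuous_dirichlet_kernel N u : continuous (dirichlet_kernel N) u.
Proof.
  apply (ex_derive_continuous (K := R_AbsRing) (V := R_NormedModule)).
  apply ex_derive_dirichlet_kernel.
Qed.

Lemma dirichlet_kernel_mul_sin N u :
  dirichlet_kernel N u * sin (u / 2) = sin ((INR N + / 2) * u).
Proof.
  induction N.
  - simpl. rewrite Rmult_1_l. f_equal. field.
  - cbn [dirichlet_kernel]. rewrite Rmult_plus_distr_r, IHN, S_INR.
    replace ((INR N + / 2) * u) with ((INR N + 1) * u - u / 2) by field.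
    replace ((INR N + 1 + / 2) * u) with ((INR N + 1) * u + u / 2) by field.
    rewrite sin_minus, sin_plus. ring.
Qed.

Lemma RInt_dirichlet_kernel N : RInt (dirichlet_kernel N) (- PI) PI = 2 * PI.
Proof.
  induction N.
  - simpl. rewrite RInt_const. change scal with Rmult. simpl. R_eq. ring.
  - cbn [dirichlet_kernel].
    assert (Hcos : RInt (fun u => cos (INR (S N) * u)) (- PI) PI = 0).
    { rewrite <- (RInt_cos_mult (S N)) by lia.
      rewrite <- (RInt_periodic_centered (fun t => cos (INR (S N) * t)) 0).
      - apply RInt_ext. intros; do 2 f_equal; ring.
      - intros; continuous_by_derive.
      - intros t. rewrite <- (cos_period (INR (S N) * t) (S N)). f_equal. ring. }
    assert (Hc : forall y, continuous (fun u => cos (INR (S N) * u)) y)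
      by (intros; continuous_by_derive).
    rewrite (RInt_plus_continuous _ _ _ _ (continuous_dirichlet_kernel N)
               (continuous_scal_R _ 2 Hc)), RInt_scal_continuous, IHN, Hcos by exact Hc.
    R_eq. ring.
Qed.

Section PartialSums.

Variables (h : R -> R) (x : R).
Hypothesis Hh : forall y, continuous h y.
Hypothesis Hper : periodic2pi h.

Let continuous_h_shift_mul (f : R -> R) : (forall y, continuous f y) ->
  forall y, continuous (fun u => h (x + u) * f u) y.
Proof.
  intros Hf. apply continuous_mult_R; auto. intros y.
  apply (continuous_comp (fun u => x + u) h); [continuous_by_derive | apply Hh].
Qed.

Lemma fourier_harmonic_centered m : (1 <= m)%nat ->
  fa h m * cos (INR m * x) + fb h m * sin (INR m * x)
  = / PI * RInt (fun u => h (x + u) * cos (INR m * u)) (- PI) PI.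
Proof.
  intros Hm.
  set (F := fun t => h t * cos (INR m * (t - x))).
  assert (HF : forall y, continuous F y)
    by (apply continuous_mult_R; auto; intros; continuous_by_derive).
  assert (Hhc : forall y, continuous (fun t => h t * cos (INR m * t)) y)
    by (apply continuous_mult_R; auto; intros; continuous_by_derive).
  assert (Hhs : forall y, continuous (fun t => h t * sin (INR m * t)) y)
    by (apply continuous_mult_R; auto; intros; continuous_by_derive).
  transitivity (/ PI * RInt F 0 (2 * PI)).
  - unfold fa, fb, F.
    rewrite (RInt_ext (fun t => h t * cos (INR m * (t - x)))
      (fun t => cos (INR m * x) * (h t * cos (INR m * t))
                + sin (INR m * x) * (h t * sin (INR m * t)))).
    + rewrite RInt_plus_continuous, !RInt_scal_continuous
        by first [apply Hhc | apply Hhs | apply continuous_scal_R, Hhc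
                 | apply continuous_scal_R, Hhs].
      R_eq. ring.
    + intros t _. rewrite Rmult_minus_distr_l, cos_minus. R_eq. ring.
  - f_equal. rewrite <- (RInt_periodic_centered F x HF).
    + apply RInt_ext. intros u _. unfold F. do 3 f_equal. ring.
    + intros t. unfold F. rewrite Hper.
      rewrite <- (cos_period (INR m * (t - x)) m). do 2 f_equal. ring.
Qed.

Lemma fourier_partial_sum_dirichlet N :
  sum_n (fourier_term h x) N
  = / (2 * PI) * RInt (fun u => h (x + u) * dirichlet_kernel N u) (- PI) PI.
Proof.
  pose proof PI_RGT_0.
  induction N.
  - rewrite sum_O. unfold fourier_term, fa0. f_equal.
    rewrite <- (RInt_periodic_centered h x) by auto.
    apply RInt_ext. intros; simpl. symmetry; apply Rmult_1_r.
  - rewrite sum_Sn, IHN. change plus with Rplus.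
    change (fourier_term h x (S N))
      with (fa h (S N) * cos (INR (S N) * x) + fb h (S N) * sin (INR (S N) * x)).
    rewrite fourier_harmonic_centered by lia.
    rewrite (RInt_ext (fun u => h (x + u) * dirichlet_kernel (S N) u)
      (fun u => h (x + u) * dirichlet_kernel N u + 2 * (h (x + u) * cos (INR (S N) * u))))
      by (intros; cbn [dirichlet_kernel]; R_eq; ring).
    assert (HD : forall y, continuous (fun u => h (x + u) * dirichlet_kernel N u) y)
      by (apply continuous_h_shift_mul, continuous_dirichlet_kernel).
    assert (Hc : forall y, continuous (fun u => h (x + u) * cos (INR (S N) * u)) y)
      by (apply continuous_h_shift_mul; intros; continuous_by_derive).
    rewrite RInt_plus_continuous, RInt_scal_continuous
      by first [apply HD | apply Hc | apply continuous_scal_R, Hc].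
    R_eq. field. lra.
Qed.

Lemma fourier_partial_sum_error N :
  sum_n (fourier_term h x) N - h x
  = / (2 * PI) * RInt (fun u => (h (x + u) - h x) * dirichlet_kernel N u) (- PI) PI.
Proof.
  pose proof PI_RGT_0.
  rewrite fourier_partial_sum_dirichlet.
  rewrite (RInt_ext (fun u => (h (x + u) - h x) * dirichlet_kernel N u)
    (fun u => h (x + u) * dirichlet_kernel N u - h x * dirichlet_kernel N u))
    by (intros; R_eq; ring).
  pose proof (continuous_dirichlet_kernel N) as HD.
  rewrite RInt_minus_continuous, RInt_scal_continuous, RInt_dirichlet_kernel.
  - R_eq. field. lra.
  - exact HD.
  - exact (continuous_h_shift_mul _ HD).
  - exact (continuous_scal_R _ (h x) HD).
Qed.

End PartialSums.

Lemma continuity_pt_abs (f : R -> R) x : continuous f x -> continuity_pt (fun y => Rabs (f y)) x.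
Proof.
  intros H. apply (continuity_pt_comp f Rabs).
  - apply continuity_pt_filterlim; auto.
  - apply Rcontinuity_abs.
Qed.

Lemma RInt_mul_sin_by_parts a b (q q' : R -> R) M : a <= b -> 0 < M ->
  (forall u, a <= u <= b -> is_derive q u (q' u)) ->
  (forall u, a <= u <= b -> continuous q' u) ->
  RInt (fun u => q u * sin (M * u)) a b
  = (q a * cos (M * a) - q b * cos (M * b) + RInt (fun u => q' u * cos (M * u)) a b) / M.
Proof.
  intros Hab HM Hd Hc.
  assert (Hqc : forall u, a <= u <= b -> continuous q u).
  { intros u Hu. apply (ex_derive_continuous (K := R_AbsRing) (V := R_NormedModule)).
    exists (q' u); apply Hd; auto. }
  assert (Hq'cos : forall u, a <= u <= b -> continuous (fun u => q' u * cos (M * u)) u)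
    by (intros u Hu; apply (continuous_mult q'); [apply Hc; auto | continuous_by_derive]).
  assert (HI : is_RInt (fun u => q u * sin (M * u) - q' u * cos (M * u) / M) a b
                 (- (q b * cos (M * b)) / M - - (q a * cos (M * a)) / M)).
  { apply (is_RInt_derive (V := R_CompleteNormedModule) (fun u => - (q u * cos (M * u)) / M)).
    - intros u Hu. rewrite Rmin_left, Rmax_right in Hu by auto.
      auto_derive; [exists (q' u); auto|].
      replace (Derive (fun x => q x) u) with (q' u)
        by (symmetry; apply is_derive_unique; auto).
      field. lra.
    - intros u Hu. rewrite Rmin_left, Rmax_right in Hu by auto.
      apply (continuous_minus (fun u => q u * sin (M * u))).
      + apply (continuous_mult q); [apply Hqc; auto | continuous_by_derive].
      + apply (continuous_mult (fun u => q' u * cos (M * u)) (fun _ => / M)).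
        * apply Hq'cos; auto.
        * apply continuous_const. }
  assert (Hex : ex_RInt (fun u => q' u * cos (M * u)) a b).
  { apply (ex_RInt_continuous (V := R_CompleteNormedModule)). intros u Hu.
    rewrite Rmin_left, Rmax_right in Hu by auto. apply Hq'cos; auto. }
  rewrite (RInt_ext _ (fun u => (q u * sin (M * u) - q' u * cos (M * u) / M)
                                + / M * (q' u * cos (M * u))))
    by (intros; R_eq; field; lra).
  rewrite (RInt_plus (V := R_CompleteNormedModule));
    [| eexists; eauto | exact (ex_RInt_scal (V := R_CompleteNormedModule) _ _ _ (/ M) Hex)].
  rewrite (is_RInt_unique _ _ _ _ HI), (RInt_scal (V := R_CompleteNormedModule)) by auto.
  change plus with Rplus. change scal with Rmult. simpl. field. lra.
Qed.

Lemma riemann_lebesgue_bound a b (q q' : R -> R) : a <= b ->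
  (forall u, a <= u <= b -> is_derive q u (q' u)) ->
  (forall u, a <= u <= b -> continuous q' u) ->
  exists C, forall M, 0 < M -> Rabs (RInt (fun u => q u * sin (M * u)) a b) <= C / M.
Proof.
  intros Hab Hd Hc.
  destruct (continuity_ab_maj (fun u => Rabs (q' u)) a b Hab) as [Mx [HMx _]].
  { intros u Hu. apply continuity_pt_abs. auto. }
  set (K := Rabs (q' Mx)).
  exists (Rabs (q a) + Rabs (q b) + (b - a) * K).
  intros M HM. rewrite (RInt_mul_sin_by_parts a b q q' M) by auto.
  assert (Hcos : forall t, Rabs (cos t) <= 1) by (intros; apply Rabs_le, COS_bound).
  assert (HI : Rabs (RInt (fun u => q' u * cos (M * u)) a b) <= (b - a) * K).
  { apply abs_RInt_le_const; auto.
    - apply (ex_RInt_continuous (V := R_CompleteNormedModule)). intros u Hu.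
      rewrite Rmin_left, Rmax_right in Hu by auto.
      apply (continuous_mult q'); [apply Hc; auto | continuous_by_derive].
    - intros t Ht. rewrite Rabs_mult. pose proof (HMx t Ht). fold K in H.
      pose proof (Hcos (M * t)). pose proof (Rabs_pos (q' t)).
      pose proof (Rabs_pos (cos (M * t))). nra. }
  unfold Rdiv. rewrite Rabs_mult, (Rabs_right (/ M)) by (apply Rle_ge, Rlt_le, Rinv_0_lt_compat; auto).
  apply Rmult_le_compat_r; [apply Rlt_le, Rinv_0_lt_compat; auto|].
  eapply Rle_trans; [apply Rabs_triang|].
  eapply Rle_trans; [apply Rplus_le_compat_r, Rabs_triang|].
  rewrite Rabs_Ropp, !Rabs_mult.
  pose proof (Hcos (M * a)). pose proof (Hcos (M * b)).
  pose proof (Rabs_pos (q a)). pose proof (Rabs_pos (q b)).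
  pose proof (Rabs_pos (cos (M * a))). pose proof (Rabs_pos (cos (M * b))). nra.
Qed.

Lemma sin_ge_half a : 0 <= a <= 1 / 2 -> a / 2 <= sin a.
Proof.
  intros Ha. pose proof PI2_3_2.
  destruct (SIN a) as [Hlb _]; [lra | lra|].
  unfold sin_lb, sin_approx, sin_term in Hlb. simpl in Hlb.
  assert (0 <= a * a <= 1 / 4) by nra.
  assert (0 <= a * a * a * a <= 1 / 16) by nra.
  assert (0 <= a * a * a * a * a * a) by nra.
  nra.
Qed.

Lemma Rabs_sin_half_ge u : Rabs u <= 1 -> Rabs u / 4 <= Rabs (sin (u / 2)).
Proof.
  intros Hu. destruct (Rle_dec 0 u).
  - rewrite Rabs_right in * by lra. pose proof (sin_ge_half (u / 2) ltac:(lra)).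
    rewrite Rabs_right by lra. lra.
  - rewrite Rabs_left in * by lra. pose proof (sin_ge_half (- (u / 2)) ltac:(lra)).
    rewrite sin_neg in H. rewrite Rabs_left1 by lra. lra.
Qed.

(* [|h (x + u) - h x| <= B |u|] and [|D_N u| <= 1 / |sin (u / 2)| <= 4 / |u|]. *)
Lemma dirichlet_integrand_bound (h : R -> R) x B N u : (forall y, ex_derive h y) ->
  (forall y, x - 1 <= y <= x + 1 -> Rabs (Derive h y) <= B) -> Rabs u <= 1 ->
  Rabs ((h (x + u) - h x) * dirichlet_kernel N u) <= 4 * B.
Proof.
  intros Hd HB Hu.
  assert (B0 : 0 <= B) by (pose proof (HB x ltac:(lra)); pose proof (Rabs_pos (Derive h x)); lra).
  destruct (Req_dec u 0) as [->|Hu0].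
  { rewrite Rplus_0_r, Rminus_diag, Rmult_0_l, Rabs_R0. lra. }
  destruct (MVT_gen (fun t => h (x + t)) 0 u (fun t => Derive h (x + t))) as [c [Hc Hm]].
  { intros t _. auto_derive; [apply Hd|]. rewrite Rmult_1_l. reflexivity. }
  { intros t _. apply continuity_pt_filterlim.
    apply (ex_derive_continuous (K := R_AbsRing) (V := R_NormedModule) (fun t => h (x + t))).
    auto_derive. apply Hd. }
  rewrite Rplus_0_r, Rminus_0_r in Hm. rewrite Hm.
  assert (Hc1 : Rabs c <= Rabs u).
  { unfold Rmin, Rmax in Hc.
    destruct (Rle_dec 0 u); apply Rabs_le; [rewrite Rabs_right | rewrite Rabs_left]; lra. }
  assert (Hb : Rabs (Derive h (x + c)) <= B)
    by (apply HB; pose proof (Rabs_le_between c (Rabs u)) as [Hl _]; pose proof (Hl Hc1); lra).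
  assert (Hs1 : Rabs (dirichlet_kernel N u) * Rabs (sin (u / 2)) <= 1)
    by (rewrite <- Rabs_mult, dirichlet_kernel_mul_sin; apply Rabs_le, SIN_bound).
  pose proof (Rabs_sin_half_ge u Hu).
  rewrite !Rabs_mult.
  pose proof (Rabs_pos (Derive h (x + c))). pose proof (Rabs_pos u).
  pose proof (Rabs_pos (dirichlet_kernel N u)).
  assert (Rabs u * Rabs (dirichlet_kernel N u) <= 4) by nra.
  nra.
Qed.

Lemma dirichlet_tail_bound (h : R -> R) x a b :
  (forall y, ex_derive h y) -> (forall y, ex_derive (Derive h) y) -> a <= b ->
  (forall u, a <= u <= b -> sin (u / 2) <> 0) ->
  exists C, forall N,
    Rabs (RInt (fun u => (h (x + u) - h x) * dirichlet_kernel N u) a b) <= C / (INR N + / 2).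
Proof.
  intros Hd Hd2 Hab Hsin.
  set (q := fun u => (h (x + u) - h x) / sin (u / 2)).
  set (q' := fun u => (Derive h (x + u) * sin (u / 2) - (h (x + u) - h x) * (/ 2 * cos (u / 2)))
                      / (sin (u / 2) * sin (u / 2))).
  destruct (riemann_lebesgue_bound a b q q' Hab) as [C HC].
  { intros u Hu. specialize (Hsin u Hu). unfold q, q'.
    auto_derive; [repeat split; auto|].
    change (Derive (fun y => h y)) with (Derive h).
    unfold Rdiv in *. field. exact Hsin. }
  { intros u Hu. specialize (Hsin u Hu). unfold q'.
    apply (ex_derive_continuous (K := R_AbsRing) (V := R_NormedModule)).
    auto_derive; repeat split; auto. }
  exists C. intros N.
  rewrite (RInt_ext _ (fun u => q u * sin ((INR N + / 2) * u))).
  - apply HC. pose proof (pos_INR N). lra.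
  - intros u Hu. rewrite Rmin_left, Rmax_right in Hu by auto.
    unfold q. rewrite <- dirichlet_kernel_mul_sin. R_eq. field. apply Hsin. lra.
Qed.

Lemma Derive_bounded_on (f : R -> R) a b : a <= b ->
  (forall y, continuous (Derive f) y) ->
  exists B, 0 < B /\ forall y, a <= y <= b -> Rabs (Derive f y) <= B.
Proof.
  intros Hab Hf.
  destruct (continuity_ab_maj (fun y => Rabs (Derive f y)) a b Hab) as [M [HM _]];
    [intros; apply continuity_pt_abs, Hf|].
  exists (Rabs (Derive f M) + 1). split.
  - pose proof (Rabs_pos (Derive f M)). lra.
  - intros y Hy. specialize (HM y Hy). lra.
Qed.

Lemma eventually_div_lt C eps : 0 < eps ->
  exists N0, forall N, (N0 <= N)%nat -> C / (INR N + / 2) < eps.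
Proof.
  intros Heps. destruct (INR_unbounded (C / eps)) as [N0 HN0].
  exists N0. intros N HN. apply le_INR in HN.
  assert (Hpos : 0 < INR N + / 2) by (pose proof (pos_INR N); lra).
  apply (Rmult_lt_reg_r (INR N + / 2)); auto.
  unfold Rdiv. rewrite Rmult_assoc, Rinv_l, Rmult_1_r by lra.
  assert (Hlt : C / eps < INR N + / 2) by lra.
  apply (Rmult_lt_compat_r eps) in Hlt; auto.
  unfold Rdiv in Hlt. rewrite Rmult_assoc, Rinv_l, Rmult_1_r in Hlt by lra. lra.
Qed.

Lemma dirichlet_integral_vanishes (h : R -> R) x :
  (forall y, ex_derive h y) -> (forall y, ex_derive (Derive h) y) ->
  forall eps, 0 < eps -> exists N0, forall N, (N0 <= N)%nat ->
    Rabs (RInt (fun u => (h (x + u) - h x) * dirichlet_kernel N u) (- PI) PI) < eps.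
Proof.
  intros Hd Hd2 eps Heps. pose proof PI_RGT_0. pose proof PI2_3_2.
  destruct (Derive_bounded_on h (x - 1) (x + 1)) as [B [B0 HB]]; [lra | |].
  { intros y. apply (ex_derive_continuous (K := R_AbsRing) (V := R_NormedModule)). auto. }
  set (Phi := fun N u => (h (x + u) - h x) * dirichlet_kernel N u).
  assert (HPhi : forall N a b, ex_RInt (Phi N) a b).
  { intros N a b. apply ex_RInt_continuous_R. intros u.
    apply (continuous_mult (fun t => h (x + t) - h x)).
    - apply (continuous_minus (fun t => h (x + t))); [|apply continuous_const].
      apply (ex_derive_continuous (K := R_AbsRing) (V := R_NormedModule)).
      auto_derive. auto.
    - apply continuous_dirichlet_kernel. }
  (* near [u = 0] the integrand is bounded, away from it Riemann-Lebesgue applies *)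
  set (d := Rmin 1 (eps / (16 * B))).
  assert (Hd0 : 0 < d) by (apply Rmin_pos; [lra | apply Rdiv_lt_0_compat; lra]).
  assert (Hd1 : d <= 1) by apply Rmin_l.
  assert (HdB : 16 * B * d <= eps).
  { pose proof (Rmin_r 1 (eps / (16 * B))) as Hr. fold d in Hr.
    apply (Rmult_le_compat_l (16 * B)) in Hr; [|lra].
    replace (16 * B * (eps / (16 * B))) with eps in Hr by (field; lra). lra. }
  destruct (dirichlet_tail_bound h x (- PI) (- d) Hd Hd2) as [C1 HC1]; [lra | |].
  { intros u Hu. replace (u / 2) with (- (- u / 2)) by field. rewrite sin_neg.
    assert (0 < sin (- u / 2)) by (apply sin_gt_0; lra). lra. }
  destruct (dirichlet_tail_bound h x d PI Hd Hd2) as [C2 HC2]; [lra | |].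
  { intros u Hu. assert (0 < sin (u / 2)) by (apply sin_gt_0; lra). lra. }
  destruct (eventually_div_lt (C1 + C2) (eps / 2)) as [N0 HN0]; [lra|].
  exists N0. intros N HN. specialize (HN0 N HN). specialize (HC1 N). specialize (HC2 N).
  assert (Hcenter : Rabs (RInt (Phi N) (- d) d) <= (d - - d) * (4 * B)).
  { apply abs_RInt_le_const; [lra | apply HPhi |].
    intros t Ht. apply dirichlet_integrand_bound; auto. apply Rabs_le. lra. }
  fold (Phi N).
  rewrite <- (RInt_Chasles (Phi N) (- PI) (- d) PI), <- (RInt_Chasles (Phi N) (- d) d PI)
    by apply HPhi.
  change plus with Rplus. unfold Phi in *.
  eapply Rle_lt_trans; [apply Rabs_triang|].
  eapply Rle_lt_trans; [apply Rplus_le_compat_l, Rabs_triang|].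
  unfold Rdiv in *. lra.
Qed.

Lemma fourier_series_converges (h : R -> R) x :
  smooth h -> periodic2pi h -> is_series (fourier_term h x) (h x).
Proof.
  intros Hs Hper.
  assert (Hd : forall y, ex_derive h y) by (intro y; exact (Hs 1%nat y)).
  assert (Hd2 : forall y, ex_derive (Derive h) y) by (intro y; exact (Hs 2%nat y)).
  assert (Hh : forall y, continuous h y)
    by (intro y; apply (ex_derive_continuous (K := R_AbsRing) (V := R_NormedModule)); auto).
  pose proof PI_RGT_0.
  assert (Hinv : 0 < / (2 * PI) < 1).
  { split; [apply Rinv_0_lt_compat; lra|].
    apply (Rmult_lt_reg_r (2 * PI)); [lra|]. rewrite Rinv_l by lra. pose proof PI2_3_2. lra. }
  enough (Hlim : is_lim_seq (sum_n (fourier_term h x)) (h x)) by exact Hlim.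
  apply is_lim_seq_spec. intros eps.
  destruct (dirichlet_integral_vanishes h x Hd Hd2 eps (cond_pos eps)) as [N0 HN0].
  exists N0. intros N HN. specialize (HN0 N HN).
  rewrite fourier_partial_sum_error, Rabs_mult, Rabs_right by (auto; lra).
  pose proof (Rabs_pos (RInt (fun u => (h (x + u) - h x) * dirichlet_kernel N u) (- PI) PI)).
  nra.
Qed.

Lemma steiner_point_fourier h : steiner_point h = (fa h 1, fb h 1).
Proof.
  unfold steiner_point, fa, fb.
  f_equal; f_equal; apply RInt_ext; intros t _; simpl; rewrite Rmult_1_l; reflexivity.
Qed.

Lemma kterm_theta h k s j n : (0 < k)%nat -> kterm h k (theta k s j) n = kterm h k s n.
Proof.
  intros Hk. unfold kterm. destruct (andb _ _) eqn:E; [|reflexivity].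
  apply Bool.andb_true_iff in E as [_ E]. apply Nat.eqb_eq in E.
  pose proof (Nat.div_mod_eq n k) as Hd. rewrite E, Nat.add_0_r in Hd.
  assert (INR k <> 0) by (apply not_0_INR; lia).
  assert (HI : INR n = INR k * INR (n / k)) by (rewrite Hd at 1; rewrite mult_INR; auto).
  replace (INR n * theta k s j) with (INR n * s + 2 * INR (n / k * j) * PI)
    by (unfold theta; rewrite mult_INR, HI; field; auto).
  rewrite cos_period, sin_period. reflexivity.
Qed.

Lemma kterm_series_of_fourier h k s :
  (forall n, (2 <= n)%nat -> (n mod k <> 0)%nat -> fa h n = 0 /\ fb h n = 0) ->
  is_series (fourier_term h s) (h s) ->
  is_series (kterm h k s) (h s - fa0 h - fa h 1 * cos s - fb h 1 * sin s).
Proof.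
  intros Hvanish Hser.
  apply (is_series_decr_n _ 2); [lia|].
  replace (plus _ _) with (h s - sum_n (fourier_term h s) 1).
  2:{ simpl Nat.pred. rewrite !sum_Sn, !sum_O. unfold kterm, fourier_term. simpl.
      rewrite !Rmult_1_l. change plus with Rplus. change opp with Ropp. ring. }
  apply (is_series_ext (fun j => fourier_term h s (2 + j))).
  - intros j. unfold kterm.
    replace (Nat.ltb 1 (2 + j)) with true by (symmetry; apply Nat.ltb_lt; lia).
    destruct (Nat.eqb ((2 + j) mod k) 0) eqn:Hmod; [reflexivity|].
    apply Nat.eqb_neq in Hmod.
    destruct (Hvanish (2 + j)%nat) as [Ha Hb]; [lia | auto |].
    change (fourier_term h s (2 + j))
      with (fa h (2 + j) * cos (INR (2 + j) * s) + fb h (2 + j) * sin (INR (2 + j) * s)).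
    rewrite Ha, Hb. cbv beta iota delta [andb]. R_eq. ring.
  - apply is_series_incr_n; [lia|].
    simpl Nat.pred. replace (plus _ _) with (h s).
    2:{ change plus with Rplus. unfold Rminus. rewrite Rplus_assoc, Rplus_opp_l. ring. }
    exact Hser.
Qed.

Lemma kterm_series_circle_support h k s a1 b1 : (0 < k)%nat ->
  (forall t, is_series (kterm h k t) (h t - fa0 h - a1 * cos t - b1 * sin t)) ->
  circle_support_at h k s (h s - a1 * cos s - b1 * sin s) a1 b1.
Proof.
  intros Hk Hser j.
  pose proof (is_series_unique _ _ (Hser s)) as Hs.
  pose proof (is_series_unique _ _ (Hser (theta k s j))) as Ht.
  rewrite (Series_ext _ (kterm h k s)), Hs in Ht by (intros; apply kterm_theta; auto).
  lra.
Qed.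

Theorem proposition4p1 (h : R -> R) (k : nat) :
  smooth h -> periodic2pi h -> (2 < k)%nat ->
  ((forall s : R, regular_polygon h k s /\ center_of_mass h k s = steiner_point h)
   <->
   (forall s : R,
      is_series (kterm h k s)
        (h s - fa0 h - fa h 1 * cos s - fb h 1 * sin s))).
Proof.
  intros Hs Hper Hk. rewrite steiner_point_fourier. split.
  - intros Hpoly s.
    apply kterm_series_of_fourier; [|apply fourier_series_converges; auto].
    intros n Hn Hnk.
    apply (fourier_coef_vanish h (exterior_angle k) (fa h 1) (fb h 1)); auto.
    + intros y. apply (ex_derive_continuous (K := R_AbsRing) (V := R_NormedModule)).
      exact (Hs 1%nat y).
    + apply regular_centered_shift_invariant; auto.
    + apply Rlt_not_eq, cos_mult_exterior_angle_lt_1; auto; lia.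
  - intros Hser s.
    pose proof (kterm_series_circle_support h k s _ _ ltac:(lia) Hser) as Hcirc.
    split; [eapply regular_polygon_circle | eapply center_of_mass_circle]; eauto.
Qed.
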